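(* Let a logic be given by a sentential language with a constant expressive semantics over a finite set $V$ of truth values, whose consequence relation is induced by an intersective mixed consequence truth-relation $\models$, and suppose the logic has a G-conditional. Then for every classical connective $C$ (a truth function $\{0,1\}^n\to\{0,1\}$), there is a truth function $\underline{C^+}:V^n\to V$ such that a connective $C^+$ interpreted by it is regular for the logic with a regularity rule $(\mathcal{B}^p,\mathcal{B}^c)$ that is also satisfied by $C$ in classical logic.
   Context: Truth values: finite $V$ containing distinct $1,0$. A set of designated values is $\mathcal{D}\subseteq V$ with $1\in\mathcal{D}$, $0\notin\mathcal{D}$; the mixed truth-relation $\models_{\mathcal{D}_p,\mathcal{D}_c}$ holds between $\gamma,\delta\subseteq V$ iff ($\gamma\subseteq\mathcal{D}_p\Rightarrow\delta\cap\mathcal{D}_c\neq\emptyset$); an intersective mixed truth-relation is a finite intersection of such. A sentential language has denumerably many atoms and connectives; a semantics is a set of valuations mapping atoms to $V$, interpreting each $n$-ary connective by a fixed truth function $V^n\to V$ (same for all valuations), extended compositionally, and such that every assignment of values to finitely many distinct atoms is realized by some valuation. The induced consequence relation on sets of formulas: $\Gamma\vdash\Delta$ iff $v(\Gamma)\models v(\Delta)$ for every valuation $v$. Constant expressive: for every $\alpha\in V$ some formula has value $\alpha$ under every valuation. Write $\Gamma,A$ for $\Gamma\cup\{A\}$. An $n$-ary connective $C$ is regular with regularity rule $(\mathcal{B}^p,\mathcal{B}^c)$, $\mathcal{B}^p,\mathcal{B}^c\subseteq\mathcal{P}(\{1..n\})^2$, if for all $\Gamma,\Delta,F_1,\dots,F_n$: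 $\Gamma,C(F_1,\dots,F_n)\vdash\Delta$ iff for all $(B_p,B_c)\in\mathcal{B}^p$, $\Gamma\cup\{F_i:i\in B_p\}\vdash\{F_i:i\in B_c\}\cup\Delta$; and $\Gamma\vdash C(F_1,\dots,F_n),\Delta$ iff the same holds for all $(B_p,B_c)\in\mathcal{B}^c$. A G-conditional $\to$ is a binary connective with: $\Gamma\vdash A\to B,\Delta$ iff $\Gamma,A\vdash B,\Delta$; and $\Gamma,A\to B\vdash\Delta$ iff ($\Gamma\vdash A,\Delta$ and $\Gamma,B\vdash\Delta$). Classical logic: $V=\{0,1\}$ with the truth-relation $\models_{\{1\},\{1\}}$. *)

From mathcomp Require Import all_boot.

Set Implicit Arguments.
Unset Strict Implicit.
Unset Printing Implicit Defensive.

Section Lang.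
Variables (Con : Type) (ar : Con -> nat).

Inductive formula : Type :=
| Atom of nat
| App (c : Con) of ('I_(ar c) -> formula).

Definition interp (V : Type) := forall c : Con, ('I_(ar c) -> V) -> V.

Fixpoint eval (V : Type) (I : interp V) (s : nat -> V) (F : formula) : V :=
  match F with
  | Atom n => s n
  | App c g => I c (fun i => eval I s (g i))
  end.

Definition realizes_finite (V : Type) (S : (nat -> V) -> Prop) :=
  forall (A : seq nat) (g : nat -> V),
    exists2 s, S s & forall a, a \in A -> s a = g a.

Definition constant_expressive (V : Type) (S : (nat -> V) -> Prop) (I : interp V) :=
  forall alpha : V, exists F : formula, forall s, S s -> eval I s F = alpha.

Definition vimg (V : Type) (I : interp V) (s : nat -> V) (G : formula -> Prop) : V -> Prop :=
  fun x => exists2 F, G F & eval I s F = x.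

Definition consequence (V : Type) (S : (nat -> V) -> Prop) (I : interp V)
    (R : (V -> Prop) -> (V -> Prop) -> Prop) (G D : formula -> Prop) : Prop :=
  forall s, S s -> R (vimg I s G) (vimg I s D).

End Lang.

Arguments Atom {Con ar}.
Arguments App {Con ar}.

Definition addf (X : Type) (G : X -> Prop) (A : X) : X -> Prop :=
  fun F => G F \/ F = A.
Definition unionf (X : Type) (G D : X -> Prop) : X -> Prop :=
  fun F => G F \/ D F.
Definition imgf (X : Type) (n : nat) (F : 'I_n -> X) (B : {set 'I_n}) : X -> Prop :=
  fun G => exists2 i, i \in B & G = F i.

Definition designated (V : finType) (one zero : V) (D : {set V}) :=
  one \in D /\ zero \notin D.

Definition mixed (V : finType) (Dp Dc : {set V}) (g d : V -> Prop) : Prop :=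
  (forall x, g x -> x \in Dp) -> exists2 x, d x & x \in Dc.

Definition inter_mixed (V : finType) (L : seq ({set V} * {set V}))
    (g d : V -> Prop) : Prop :=
  forall p, p \in L -> mixed p.1 p.2 g d.

Definition regular (X : Type) (cons : (X -> Prop) -> (X -> Prop) -> Prop)
    (n : nat) (C : ('I_n -> X) -> X) (Bp Bc : {set {set 'I_n} * {set 'I_n}}) :=
  forall (G D : X -> Prop) (F : 'I_n -> X),
    (cons (addf G (C F)) D <->
       forall B, B \in Bp -> cons (unionf G (imgf F B.1)) (unionf (imgf F B.2) D))
 /\ (cons G (addf D (C F)) <->
       forall B, B \in Bc -> cons (unionf G (imgf F B.1)) (unionf (imgf F B.2) D)).

Definition Gconditional (X : Type) (cons : (X -> Prop) -> (X -> Prop) -> Prop)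
    (imp : X -> X -> X) :=
  forall (G D : X -> Prop) (A B : X),
    (cons G (addf D (imp A B)) <-> cons (addf G A) (addf D B))
 /\ (cons (addf G (imp A B)) D <-> (cons G (addf D A) /\ cons (addf G B) D)).

Definition has_Gconditional (Con : Type) (ar : Con -> nat)
    (cons : (formula ar -> Prop) -> (formula ar -> Prop) -> Prop) :=
  exists c0 : Con, ar c0 = 2 /\
    Gconditional cons
      (fun A B => App c0 (fun i : 'I_(ar c0) => if nat_of_ord i == 0 then A else B)).

Definition ext_ar (Con : Type) (ar : Con -> nat) (n : nat) : option Con -> nat :=
  fun c => match c with Some c' => ar c' | None => n end.

Definition ext_I (Con : Type) (ar : Con -> nat) (V : Type) (I : interp ar V)
    (n : nat) (f : ('I_n -> V) -> V) : interp (ext_ar ar n) V :=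
  fun c => match c return ('I_(ext_ar ar n c) -> V) -> V with
           | Some c' => I c'
           | None => f
           end.

Definition newconn (Con : Type) (ar : Con -> nat) (n : nat)
    (F : 'I_n -> formula (ext_ar ar n)) : formula (ext_ar ar n) :=
  @App _ (ext_ar ar n) None F.

Definition classical_cons (Con : Type) (ar : Con -> nat) (I : interp ar bool) :=
  consequence (fun _ : nat -> bool => True) I
    (inter_mixed [:: ([set true], [set true])]).

From mathcomp Require Import all_boot.
From Stdlib Require Import Classical FunctionalExtensionality.

(* An intersective mixed truth-relation is the intersection of its minimal
   pairs (Dp, Dc). By constant expressiveness, a sequent whose left side
   contains every constant formula with value in Dp and whose right side
   contains every constant formula with value outside Dc can only be refuted
   at (Dp, Dc); evaluating the two rules of the G-conditional on such sequents
   shows that its truth function f satisfies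
     f a b \in Dp = (a \notin Dc) || (b \in Dp),
     f a b \in Dc = (a \notin Dp) || (b \in Dc).
   Hence "in Dp" and "in Dc" behave like two classical valuations that the
   negation a |-> f a 0 exchanges. The disjunctive normal form of C written
   with f then lies in Dp (resp. outside Dc) exactly when some true row of C
   is matched by its arguments, and these two conditions are the left rule Bp
   (one premise per true row) and the right rule Bc (all pairs hitting every
   true row), which C also obeys classically. *)

Set Implicit Arguments.
Unset Strict Implicit.
Unset Printing Implicit Defensive.

Section MinimalPairs.
Variable V : finType.
Implicit Types (P Q R : {set V} * {set V}) (L : seq ({set V} * {set V})).

Definition pair_below Q P := (P.1 \subset Q.1) && (Q.2 \subset P.2).

Definition minimal_in L P := (P \in L) && all (fun Q => pair_below Q P ==> (Q == P)) L.

Lemma pair_below_refl P : pair_below P P.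
Proof. by rewrite /pair_below !subxx. Qed.

Lemma pair_below_trans R Q P : pair_below R Q -> pair_below Q P -> pair_below R P.
Proof.
case/andP=> sQR sRQ /andP[sPQ sQP]; apply/andP; split.
  exact: subset_trans sPQ sQR.
exact: subset_trans sRQ sQP.
Qed.

Lemma mixed_pair_below Q P g d :
  pair_below Q P -> mixed Q.1 Q.2 g d -> mixed P.1 P.2 g d.
Proof.
case/andP=> /subsetP sPQ /subsetP sQP mixQ gP.
have [x dx xQ] := mixQ (fun x gx => sPQ x (gP x gx)).
by exists x => //; apply: sQP.
Qed.

Lemma minimal_in_below L P Q :
  minimal_in L P -> Q \in L -> pair_below Q P -> Q = P.
Proof. by case/andP=> _ /allP minP QL QP; apply/eqP/(implyP (minP Q QL)). Qed.

Lemma exists_minimal_below L P :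
  P \in L -> exists2 Q, minimal_in L Q & pair_below Q P.
Proof.
move=> PL; pose size_below Q := #|~: Q.1| + #|Q.2|.
have PP : (P \in L) && pair_below P P by rewrite PL pair_below_refl.
have [Q /andP[QL QP] Qmin] :=
  @arg_minnP _ P [pred Q | (Q \in L) && pair_below Q P] size_below PP.
exists Q => //; rewrite /minimal_in QL; apply/allP => R RL; apply/implyP => RQ.
have /andP[sQR sRQ] := RQ.
have le_size := leqif_add (subset_leqif_cards (etrans (setCS _ _) sQR))
                          (subset_leqif_cards sRQ).
have := Qmin R; rewrite inE RL (pair_below_trans RQ QP) => /(_ isT).
rewrite /size_below (geq_leqif le_size) => /andP[eqC1 eq2].
by rewrite -pair_eqE /= -(inj_eq (@setC_inj _)) eqC1 eq2.
Qed.

Lemma inter_mixed_minimal L g d :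
  inter_mixed L g d <-> forall P, minimal_in L P -> mixed P.1 P.2 g d.
Proof.
split=> [mixL P /andP[PL _] | mixM P PL]; first exact: mixL.
have [Q minQ QP] := exists_minimal_below PL.
exact: mixed_pair_below QP (mixM Q minQ).
Qed.

End MinimalPairs.

Section Refutations.
Variables (Con : Type) (ar : Con -> nat) (V : finType) (I : interp ar V).
Variables (S : (nat -> V) -> Prop) (L : seq ({set V} * {set V})).
Local Notation formula := (formula ar).
Local Notation cons := (consequence S I (inter_mixed L)).
Implicit Types (P : {set V} * {set V}) (G D : formula -> Prop) (s : nat -> V).

Definition refutes s P G D :=
  (forall F, G F -> eval I s F \in P.1) /\ (forall F, D F -> eval I s F \notin P.2).

Lemma mixed_vimg s P G D :
  mixed P.1 P.2 (vimg I s G) (vimg I s D) <-> ~ refutes s P G D.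
Proof.
split=> [mixP [GP DP] | noref GP].
  have [_ [F DF <-] FP] : exists2 x, vimg I s D x & x \in P.2.
    by apply: mixP => _ [F GF <-]; apply: GP.
  by move/negP: (DP F DF).
apply: NNPP => noD; apply: noref; split=> [F GF | F DF].
  by apply: GP; exists F.
by apply/negP => FP; apply: noD; exists (eval I s F) => //; exists F.
Qed.

Lemma consequence_minimal G D :
  cons G D <-> forall s P, S s -> minimal_in L P -> ~ refutes s P G D.
Proof.
split=> [consGD s P Ss minP | noref s Ss].
  by apply/mixed_vimg; apply: (proj1 (inter_mixed_minimal _ _ _) (consGD s Ss)).
by apply/inter_mixed_minimal => P minP; apply/mixed_vimg/noref.
Qed.

Lemma refutes_addl s P G D A :
  refutes s P (addf G A) D <-> refutes s P G D /\ eval I s A \in P.1.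
Proof.
rewrite /refutes /addf; split=> [[GP DP] | [[GP DP] AP]].
  by do !split=> //; [move=> F GF; apply: GP; left | apply: GP; right].
by split=> // F [GF | ->]; [apply: GP | ].
Qed.

Lemma refutes_addr s P G D A :
  refutes s P G (addf D A) <-> refutes s P G D /\ eval I s A \notin P.2.
Proof.
rewrite /refutes /addf; split=> [[GP DP] | [[GP DP] AP]].
  by do !split=> //; [move=> F DF; apply: DP; left | apply: DP; right].
by split=> // F [DF | ->]; [apply: DP | ].
Qed.

Definition fits n (pp rr : 'I_n -> bool) (B : {set 'I_n} * {set 'I_n}) :=
  [forall i in B.1, pp i] && [forall i in B.2, ~~ rr i].

Lemma refutes_split s P G D n (F : 'I_n -> formula) B :
  refutes s P (unionf G (imgf F B.1)) (unionf (imgf F B.2) D) <->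
  refutes s P G D /\
  fits (fun i => eval I s (F i) \in P.1) (fun i => eval I s (F i) \in P.2) B.
Proof.
rewrite /refutes /unionf /imgf.
split=> [[GP DP] | [[GP DP] /andP[/forall_inP B1P /forall_inP B2P]]].
  split; first by split=> [H GH | H DH]; [apply: GP; left | apply: DP; right].
  apply/andP; split; apply/forall_inP => i iB.
    by apply: GP; right; exists i.
  by apply: DP; left; exists i.
split=> [H [GH | [i iB ->]] | H [[i iB ->] | DH]].
- exact: GP.
- exact: B1P.
- exact: B2P.
- exact: DP.
Qed.

Lemma regular_of_tables n (conn : ('I_n -> formula) -> formula)
    (Bp Bc : {set {set 'I_n} * {set 'I_n}}) :
  (forall F s P, S s -> minimal_in L P ->
     let inP1 i := eval I s (F i) \in P.1 in
     let inP2 i := eval I s (F i) \in P.2 in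
     (eval I s (conn F) \in P.1) = [exists B in Bp, fits inP1 inP2 B] /\
     (eval I s (conn F) \notin P.2) = [exists B in Bc, fits inP1 inP2 B]) ->
  regular cons conn Bp Bc.
Proof.
move=> tables G D F; split; split.
- move=> /consequence_minimal consl B BBp.
  apply/consequence_minimal => s P Ss minP /refutes_split[refGD fitB].
  apply: (consl s P Ss minP); apply/refutes_addl; split=> //.
  by rewrite (tables F s P Ss minP).1; apply/exists_inP; exists B.
- move=> consB; apply/consequence_minimal => s P Ss minP /refutes_addl[refGD].
  rewrite (tables F s P Ss minP).1 => /exists_inP[B BBp fitB].
  by move/consequence_minimal: (consB B BBp) => /(_ s P Ss minP); apply; apply/refutes_split.
- move=> /consequence_minimal consr B BBc.
  apply/consequence_minimal => s P Ss minP /refutes_split[refGD fitB].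
  apply: (consr s P Ss minP); apply/refutes_addr; split=> //.
  by rewrite (tables F s P Ss minP).2; apply/exists_inP; exists B.
- move=> consB; apply/consequence_minimal => s P Ss minP /refutes_addr[refGD].
  rewrite (tables F s P Ss minP).2 => /exists_inP[B BBc fitB].
  by move/consequence_minimal: (consB B BBc) => /(_ s P Ss minP); apply; apply/refutes_split.
Qed.

End Refutations.

Section PinnedSequents.
Variables (Con : Type) (ar : Con -> nat) (V : finType) (I : interp ar V).
Variables (S : (nat -> V) -> Prop) (L : seq ({set V} * {set V})).
Hypothesis S_const : constant_expressive S I.
Hypothesis S_nonempty : exists s, S s.
Local Notation formula := (formula ar).
Local Notation cons := (consequence S I (inter_mixed L)).
Local Notation refutes := (refutes I).
Implicit Types (P Q : {set V} * {set V}) (G D : formula -> Prop) (s : nat -> V).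

Definition const_in (T : pred V) : formula -> Prop :=
  fun F => exists2 u, T u & forall s, S s -> eval I s F = u.

Definition pinned_left P := const_in (fun u => u \in P.1).
Definition pinned_right P := const_in (fun u => u \notin P.2).

Lemma refutes_pinned s P : S s -> refutes s P (pinned_left P) (pinned_right P).
Proof. by move=> Ss; split=> F [u uP HF]; rewrite HF. Qed.

Lemma refutes_pinned_below s P Q G D :
  S s -> (forall F, pinned_left P F -> G F) -> (forall F, pinned_right P F -> D F) ->
  refutes s Q G D -> pair_below Q P.
Proof.
move=> Ss GP DP [GQ DQ]; apply/andP; split; apply/subsetP => u uP.
  have [K HK] := S_const u.
  by have := GQ K (GP K (ex_intro2 _ _ u uP HK)); rewrite HK.
have [K HK] := S_const u.
apply: contraTT uP => uP.
by have := DQ K (DP K (ex_intro2 _ _ u uP HK)); rewrite HK.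
Qed.

Lemma consequence_pinned P G D (c : Prop) :
  minimal_in L P ->
  (forall F, pinned_left P F -> G F) -> (forall F, pinned_right P F -> D F) ->
  (forall s, S s -> refutes s P G D <-> c) -> cons G D <-> ~ c.
Proof.
have [s0 Ss0] := S_nonempty.
move=> minP GP DP refP; rewrite consequence_minimal.
split=> [noref | nc s Q Ss /andP[QL _] refQ].
  by rewrite -(refP s0 Ss0); apply: noref.
apply: nc; rewrite -(refP s Ss).
by rewrite -(minimal_in_below minP QL (refutes_pinned_below Ss GP DP refQ)).
Qed.

Section ConstantFormulas.
Variables (P : {set V} * {set V}) (A B : formula) (a b : V).
Hypothesis minP : minimal_in L P.
Hypotheses (A_const : forall s, S s -> eval I s A = a)
           (B_const : forall s, S s -> eval I s B = b).

Lemma consequence_pinned_addl :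
  cons (addf (pinned_left P) A) (pinned_right P) <-> ~ (a \in P.1).
Proof.
apply: (consequence_pinned minP) => [F | F | s Ss]; [by left | by [] |].
by rewrite refutes_addl A_const //; have := refutes_pinned P Ss; tauto.
Qed.

Lemma consequence_pinned_addr :
  cons (pinned_left P) (addf (pinned_right P) B) <-> ~ (b \notin P.2).
Proof.
apply: (consequence_pinned minP) => [F | F | s Ss]; [by [] | by left |].
by rewrite refutes_addr B_const //; have := refutes_pinned P Ss; tauto.
Qed.

Lemma consequence_pinned_add2 :
  cons (addf (pinned_left P) A) (addf (pinned_right P) B) <->
  ~ ((a \in P.1) && (b \notin P.2)).
Proof.
apply: (consequence_pinned minP) => [F | F | s Ss]; [by left | by left |].
rewrite refutes_addr refutes_addl A_const // B_const // -(rwP andP).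
by have := refutes_pinned P Ss; tauto.
Qed.

End ConstantFormulas.

Definition cond_fun (c0 : Con) (a b : V) :=
  @I c0 (fun i : 'I_(ar c0) => if nat_of_ord i == 0 then a else b).

Local Notation cond c0 A B :=
  (App c0 (fun i : 'I_(ar c0) => if nat_of_ord i == 0 then A else B)).

Lemma eval_cond s c0 A B :
  eval I s (cond c0 A B) = cond_fun c0 (eval I s A) (eval I s B).
Proof.
by rewrite /= /cond_fun; congr (@I c0); apply: functional_extensionality => i; case: ifP.
Qed.

Lemma gconditional_table c0 P a b :
  minimal_in L P -> Gconditional cons (fun A B => cond c0 A B) ->
  (cond_fun c0 a b \in P.1) = (a \notin P.2) || (b \in P.1) /\
  (cond_fun c0 a b \in P.2) = (a \notin P.1) || (b \in P.2).
Proof.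
move=> minP condG.
have [A A_const] := S_const a; have [B B_const] := S_const b.
have AB_const s : S s -> eval I s (cond c0 A B) = cond_fun c0 a b.
  by move=> Ss; rewrite eval_cond A_const ?B_const.
have [condR condL] := condG (pinned_left P) (pinned_right P) A B.
rewrite (consequence_pinned_addr minP AB_const) in condR.
rewrite (consequence_pinned_add2 minP A_const B_const) in condR.
rewrite (consequence_pinned_addl minP AB_const) in condL.
rewrite (consequence_pinned_addr minP A_const) (consequence_pinned_addl minP B_const) in condL.
rewrite !(rwP negP) negb_and !negbK in condR.
rewrite !(rwP negP) negbK in condL.
split; last by apply/idP/idP => /condR.
by apply: negb_inj; rewrite negb_or negbK; apply/idP/andP => /condL.
Qed.

End PinnedSequents.

Section DisjunctiveNormalForm.
Variables (V : Type) (imp : V -> V -> V) (one zero : V) (p r : pred V).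
Hypotheses (p_imp : forall a b, p (imp a b) = ~~ r a || p b)
           (r_imp : forall a b, r (imp a b) = ~~ p a || r b).
Hypotheses (p_one : p one) (p_zero : ~~ p zero) (r_zero : ~~ r zero).

Definition negV a := imp a zero.
Definition orV a b := imp (negV a) b.
Definition andV a b := negV (orV (negV a) (negV b)).

Lemma p_neg a : p (negV a) = ~~ r a.
Proof. by rewrite p_imp (negbTE p_zero) orbF. Qed.

Lemma r_neg a : r (negV a) = ~~ p a.
Proof. by rewrite r_imp (negbTE r_zero) orbF. Qed.

Lemma p_or a b : p (orV a b) = p a || p b.
Proof. by rewrite p_imp r_neg negbK. Qed.

Lemma r_or a b : r (orV a b) = r a || r b.
Proof. by rewrite r_imp p_neg negbK. Qed.

Lemma p_and a b : p (andV a b) = p a && p b.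
Proof. by rewrite p_neg r_or !r_neg negb_or !negbK. Qed.

Lemma p_bigor s : p (foldr orV zero s) = has p s.
Proof. by elim: s => [|a s IHs] /=; rewrite ?(negbTE p_zero) // p_or IHs. Qed.

Lemma p_bigand s : p (foldr andV one s) = all p s.
Proof. by elim: s => [|a s IHs] //=; rewrite p_and IHs. Qed.

Variable n : nat.
Implicit Types (C : ('I_n -> bool) -> bool) (x : 'I_n -> V) (b : {ffun 'I_n -> bool}).

Definition literal x b i := if b i then x i else negV (x i).

Definition dnf C x :=
  foldr orV zero [seq foldr andV one [seq literal x b i | i <- enum 'I_n]
                 | b <- enum {ffun 'I_n -> bool} & C b].

Definition row_match C (pp rr : 'I_n -> bool) :=
  [exists b : {ffun 'I_n -> bool}, C b && [forall i, if b i then pp i else ~~ rr i]].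

Lemma p_literal x b i : p (literal x b i) = if b i then p (x i) else ~~ r (x i).
Proof. by rewrite /literal; case: (b i); rewrite ?p_neg. Qed.

Lemma p_dnf C x : p (dnf C x) = row_match C (fun i => p (x i)) (fun i => r (x i)).
Proof.
rewrite p_bigor has_map; apply/hasP/existsP => [[b] | [b /andP[Cb /forallP rowb]]].
  rewrite mem_filter => /andP[Cb _] /=; rewrite p_bigand all_map => /allP litb.
  exists b; rewrite Cb; apply/forallP => i.
  by rewrite -p_literal; apply: litb; rewrite mem_enum.
exists b; first by rewrite mem_filter Cb mem_enum.
by rewrite /= p_bigand all_map; apply/allP => i _ /=; rewrite p_literal.
Qed.

End DisjunctiveNormalForm.

Section RegularityRules.
Variable n : nat.
Implicit Types (C : ('I_n -> bool) -> bool) (pp rr : 'I_n -> bool).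

Definition Bp_of C : {set {set 'I_n} * {set 'I_n}} :=
  [set ([set i | b i], [set i | ~~ b i]) | b : {ffun 'I_n -> bool} & C b].

Definition Bc_of C : {set {set 'I_n} * {set 'I_n}} :=
  [set B : {set 'I_n} * {set 'I_n} | [forall b : {ffun 'I_n -> bool},
     C b ==> [exists i, if b i then i \in B.2 else i \in B.1]]].

Lemma exists_fits_Bp C pp rr :
  [exists B in Bp_of C, fits pp rr B] = row_match C pp rr.
Proof.
apply/exists_inP/existsP => [[B /imsetP[b Cb ->] /andP[/forall_inP B1 /forall_inP B2]] |].
  rewrite inE in Cb; exists b; rewrite Cb; apply/forallP => i.
  by case bi: (b i); [apply: B1 | apply: B2]; rewrite inE ?bi.
case=> b /andP[Cb /forallP rowb]; exists ([set i | b i], [set i | ~~ b i]).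
  by apply/imsetP; exists b; rewrite ?inE.
apply/andP; split; apply/forall_inP => i; rewrite inE => bi; have := rowb i.
  by rewrite bi.
by rewrite (negbTE bi).
Qed.

Lemma exists_fits_Bc C pp rr :
  [exists B in Bc_of C, fits pp rr B] = ~~ row_match C rr pp.
Proof.
apply/exists_inP/negP => [[B] | nomatch].
  rewrite inE => /forallP hitB /andP[/forall_inP B1 /forall_inP B2].
  case/existsP=> b /andP[Cb /forallP rowb].
  have /existsP[i] := implyP (hitB b) Cb.
  by move: (rowb i); case: (b i) => [rri /B2 | npi /B1]; rewrite ?rri ?(negbTE npi).
exists ([set i | pp i], [set i | ~~ rr i]); last first.
  by apply/andP; split; apply/forall_inP => i; rewrite inE.
rewrite inE; apply/forallP => b; apply/implyP => Cb.
have /forallPn[i rowi] : ~~ [forall i, if b i then rr i else ~~ pp i].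
  by apply/negP => rowb; apply: nomatch; apply/existsP; exists b; rewrite Cb.
by apply/existsP; exists i; move: rowi; case: (b i); rewrite !inE ?negbK.
Qed.

Lemma row_match_self C (x : 'I_n -> bool) : row_match C x x = C x.
Proof.
apply/existsP/idP => [[b /andP[Cb /forallP rowb]] | Cx].
  suff -> : x = b by [].
  by apply: functional_extensionality => i; move: (rowb i); case: (b i) (x i) => [] [].
exists [ffun i => x i].
have -> : fun_of_fin [ffun i => x i] = x.
  by apply: functional_extensionality => i; rewrite ffunE.
by rewrite Cx; apply/forallP => i; case: (x i).
Qed.

Lemma dnf_fits (V : finType) (imp : V -> V -> V) (one zero : V) (P : {set V} * {set V})
    C (x : 'I_n -> V) :
  (forall a b, (imp a b \in P.1) = (a \notin P.2) || (b \in P.1) /\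
               (imp a b \in P.2) = (a \notin P.1) || (b \in P.2)) ->
  designated one zero P.1 -> designated one zero P.2 ->
  let inP1 i := x i \in P.1 in
  let inP2 i := x i \in P.2 in
  (dnf imp one zero C x \in P.1) = [exists B in Bp_of C, fits inP1 inP2 B] /\
  (dnf imp one zero C x \notin P.2) = [exists B in Bc_of C, fits inP1 inP2 B].
Proof.
move=> imp_tab [oneP1 zeroP1] [oneP2 zeroP2] /=.
pose in1 u := u \in P.1; pose in2 u := u \in P.2.
have in1_imp a b := (imp_tab a b).1; have in2_imp a b := (imp_tab a b).2.
rewrite exists_fits_Bp exists_fits_Bc; split.
  exact: (@p_dnf _ _ _ _ in1 in2 in1_imp in2_imp oneP1 zeroP1 zeroP2).
by congr (~~ _); apply: (@p_dnf _ _ _ _ in2 in1 in2_imp in1_imp oneP2 zeroP2 zeroP1).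
Qed.

Lemma classical_fits C (x : 'I_n -> bool) :
  let inT i := x i \in [set true] in
  (C x \in [set true]) = [exists B in Bp_of C, fits inT inT B] /\
  (C x \notin [set true]) = [exists B in Bc_of C, fits inT inT B].
Proof.
have -> : (fun i => x i \in [set true]) = x.
  by apply: functional_extensionality => i; rewrite inE eqb_id.
by rewrite /= !inE eqb_id exists_fits_Bp exists_fits_Bc row_match_self.
Qed.

End RegularityRules.

Theorem theorem3p19
  (V : finType) (one zero : V)
  (Con : countType) (ar : Con -> nat) (I : interp ar V)
  (S : (nat -> V) -> Prop) (L : seq ({set V} * {set V})) :
  one != zero ->
  (exists g : nat -> Con, injective g) ->
  realizes_finite S ->
  constant_expressive S I ->
  L != [::] ->
  (forall p, p \in L -> designated one zero p.1 /\ designated one zero p.2) ->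
  has_Gconditional (consequence S I (inter_mixed L)) ->
  forall (n : nat) (C : ('I_n -> bool) -> bool),
  exists (Cplus : ('I_n -> V) -> V) (Bp Bc : {set {set 'I_n} * {set 'I_n}}),
    regular (consequence S (ext_I I Cplus) (inter_mixed L)) (@newconn Con ar n) Bp Bc
    /\ (forall (Con0 : Type) (ar0 : Con0 -> nat) (I0 : interp ar0 bool),
          regular (classical_cons (ext_I I0 C)) (@newconn Con0 ar0 n) Bp Bc).
Proof.
move=> _ _ realS S_const _ desL [c0 [_ condG]] n C.
have someS : exists s, S s by have [s Ss _] := realS [::] (fun _ => one); exists s.
exists (dnf (cond_fun I c0) one zero C), (Bp_of C), (Bc_of C); split.
  apply: regular_of_tables => F s P _ minP.
  have [desP1 desP2] := desL P (proj1 (andP minP)).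
  have cond_tab a b := gconditional_table S_const someS a b minP condG.
  exact: dnf_fits cond_tab desP1 desP2.
move=> Con0 ar0 I0; apply: regular_of_tables => F s P _ /andP[].
by rewrite mem_seq1 => /eqP-> _; apply: classical_fits.
Qed.
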